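(* For every $\lambda>0$ there exists $\delta_1=\delta_1(\lambda)>0$ such that for all $r>0$ and all $x,y\in\mathbb{R}^d$ with $r\leq\|x-y\|\leq\lambda r$, there is a point $z\in\operatorname{conv}(\{x,y\})$ such that $B(z,\delta_1 r)\subseteq W(x,y,r)$.
   Context: $B(x,r)=\{y\in\mathbb{R}^d:\|x-y\|<r\}$ is the open Euclidean ball. For $x,y\in\mathbb{R}^d$ and $r>0$, $W(x,y,r):=\{z\in B(y,\|y-x\|): B(z,r)\supseteq B(x,r)\cap B(y,\|y-x\|)\}$. $\operatorname{conv}$ denotes convex hull. *)

From mathcomp Require Import all_boot all_order all_algebra.
From mathcomp Require Import boolp classical_sets reals.
Set Implicit Arguments. Unset Strict Implicit. Unset Printing Implicit Defensive.
Import Order.TTheory GRing.Theory Num.Theory.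
Local Open Scope ring_scope.
Local Open Scope classical_set_scope.

Definition enorm (R : realType) (d : nat) (x : 'rV[R]_d) : R :=
  Num.sqrt (\sum_(i < d) x ord0 i ^+ 2).

Definition eball (R : realType) (d : nat) (x : 'rV[R]_d) (r : R) : set 'rV[R]_d :=
  [set y | enorm (x - y) < r].

Definition Wset (R : realType) (d : nat) (x y : 'rV[R]_d) (r : R) : set 'rV[R]_d :=
  [set z | eball y (enorm (y - x)) z /\
           (eball x r `&` eball y (enorm (y - x))) `<=` eball z r].

Definition conv2 (R : realType) (d : nat) (x y : 'rV[R]_d) : set 'rV[R]_d :=
  [set z | exists t : R, 0 <= t <= 1 /\ z = (1 - t) *: x + t *: y].

From mathcomp Require Import all_boot all_order all_algebra.
From mathcomp Require Import boolp classical_sets reals.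
From mathcomp Require Import ring lra.
Import Order.TTheory GRing.Theory Num.Theory.
Local Open Scope ring_scope.
Local Open Scope classical_set_scope.

(* Take z = (1 - t) x + t y with t = 1 / (1 + 2 lambda^2) and delta1 = t / 4.
   Stewart's identity |z - p|^2 = (1 - t)|x - p|^2 + t|y - p|^2 - t(1 - t)|x - y|^2
   puts every point p of the lens B(x, r) /\ B(y, |y - x|) within
   sqrt((1 - t) r^2 + t^2 |y - x|^2) <= (1 - t/4) r of z, while z lies at
   distance (1 - t)|y - x| from y.  By the triangle inequality, every w within
   t r / 4 of z is then a valid centre of W(x, y, r). *)

Section Euclidean.
Context {R : realType} {d : nat}.
Implicit Types (a b : R) (u v x y p : 'rV[R]_d).

Definition edot u v : R := \sum_(i < d) u ord0 i * v ord0 i.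

Lemma enormE u : enorm u = Num.sqrt (edot u u).
Proof. by rewrite /enorm /edot; under eq_bigr do rewrite expr2. Qed.

Lemma edot_ge0 u : 0 <= edot u u.
Proof. by apply: sumr_ge0 => i _; rewrite -expr2 sqr_ge0. Qed.

Lemma enorm_ge0 u : 0 <= enorm u.
Proof. exact: sqrtr_ge0. Qed.

Lemma sqr_enorm u : enorm u ^+ 2 = edot u u.
Proof. by rewrite enormE sqr_sqrtr ?edot_ge0. Qed.

Lemma edot0r u : edot u 0 = 0.
Proof. by apply: big1 => i _; rewrite mxE mulr0. Qed.

Lemma edot_eq0 u : edot u u = 0 -> u = 0.
Proof.
move=> /psumr_eq0P u0; apply/rowP => i; rewrite mxE.
have /eqP : u ord0 i * u ord0 i = 0 by apply: u0 => // j _; rewrite -expr2 sqr_ge0.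
by rewrite mulf_eq0 orbb => /eqP.
Qed.

Lemma edotDZ a b u v :
  edot (a *: u + b *: v) (a *: u + b *: v) =
  a ^+ 2 * edot u u + 2 * a * b * edot u v + b ^+ 2 * edot v v.
Proof.
rewrite /edot !mulr_sumr -!big_split /=.
by apply: eq_bigr => i _; rewrite !mxE; ring.
Qed.

Lemma edot_CauchySchwarz u v : edot u v ^+ 2 <= edot u u * edot v v.
Proof.
have [/edot_eq0 ->|vv_neq0] := eqVneq (edot v v) 0.
  by rewrite !edot0r mulr0 expr0n.
have vv_gt0 : 0 < edot v v by rewrite lt_def vv_neq0 edot_ge0.
(* |<v,v> u - <u,v> v|^2 = <v,v> (<u,u> <v,v> - <u,v>^2) *)
have := edot_ge0 (edot v v *: u + (- edot u v) *: v); rewrite edotDZ; nra.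
Qed.

Lemma enormD u v : enorm (u + v) <= enorm u + enorm v.
Proof.
have uv_le : edot u v <= enorm u * enorm v.
  have := edot_CauchySchwarz u v; rewrite -!sqr_enorm -exprMn.
  have := mulr_ge0 (enorm_ge0 u) (enorm_ge0 v); nra.
have := edotDZ 1 1 u v; rewrite !scale1r -!sqr_enorm.
have := enorm_ge0 u; have := enorm_ge0 v; have := enorm_ge0 (u + v); nra.
Qed.

Lemma enormZ a u : enorm (a *: u) = `|a| * enorm u.
Proof.
rewrite /enorm; under eq_bigr do rewrite mxE exprMn.
by rewrite -mulr_sumr sqrtrM ?sqr_ge0 // sqrtr_sqr.
Qed.

Lemma enormN u : enorm (- u) = enorm u.
Proof. by rewrite -scaleN1r enormZ normrN1 mul1r. Qed.

Lemma enormBC x y : enorm (x - y) = enorm (y - x).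
Proof. by rewrite -enormN opprB. Qed.

Lemma enormB_triangle x y p : enorm (x - y) <= enorm (x - p) + enorm (p - y).
Proof. by have := enormD (x - p) (p - y); rewrite addrA subrK. Qed.

Lemma sqr_enorm_conv t x y p :
  enorm ((1 - t) *: x + t *: y - p) ^+ 2 =
  (1 - t) * enorm (x - p) ^+ 2 + t * enorm (y - p) ^+ 2
  - t * (1 - t) * enorm (x - y) ^+ 2.
Proof.
have -> : (1 - t) *: x + t *: y - p = (1 - t) *: (x - p) + t *: (y - p).
  by apply/rowP => i; rewrite !mxE; ring.
have -> : x - y = 1 *: (x - p) + (-1) *: (y - p).
  by apply/rowP => i; rewrite !mxE; ring.
rewrite !sqr_enorm !edotDZ; ring.
Qed.

End Euclidean.

Section Lens.
Variables (R : realType) (d : nat) (x y : 'rV[R]_d) (r t : R).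
Hypotheses (t_ge0 : 0 <= t) (t_le1 : t <= 1).
Local Notation z := ((1 - t) *: x + t *: y).

Lemma conv_ball_sub_ball rho :
  rho <= t * enorm (y - x) -> eball z rho `<=` eball y (enorm (y - x)).
Proof.
move=> rho_le w; rewrite /eball /= => zw_lt.
have yz : enorm (y - z) = (1 - t) * enorm (y - x).
  have -> : y - z = (1 - t) *: (y - x) by apply/rowP => i; rewrite !mxE; ring.
  by rewrite enormZ ger0_norm // subr_ge0.
have := enormB_triangle y w z; rewrite yz; lra.
Qed.

Lemma sqr_enorm_conv_lens p :
  eball x r p -> eball y (enorm (y - x)) p ->
  enorm (z - p) ^+ 2 < (1 - t) * r ^+ 2 + t ^+ 2 * enorm (y - x) ^+ 2.
Proof.
rewrite /eball /= => xp_lt yp_lt.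
rewrite sqr_enorm_conv (enormBC x y).
have xp_sqr : enorm (x - p) ^+ 2 < r ^+ 2 by have := enorm_ge0 (x - p); nra.
have yp_sqr : enorm (y - p) ^+ 2 < enorm (y - x) ^+ 2.
  by have := enorm_ge0 (y - p); nra.
have [->|t_lt1] := eqVneq t 1; first lra.
have t1_gt0 : 0 < 1 - t by rewrite subr_gt0 lt_neqAle t_lt1 t_le1.
have : 0 < (1 - t) * (r ^+ 2 - enorm (x - p) ^+ 2) by rewrite mulr_gt0 // subr_gt0.
have : 0 <= t * (enorm (y - x) ^+ 2 - enorm (y - p) ^+ 2).
  by rewrite mulr_ge0 // subr_ge0 ltW.
lra.
Qed.

Lemma conv_ball_sub_Wset rho :
  rho <= t * enorm (y - x) -> rho <= r ->
  (1 - t) * r ^+ 2 + t ^+ 2 * enorm (y - x) ^+ 2 <= (r - rho) ^+ 2 ->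
  eball z rho `<=` Wset x y r.
Proof.
move=> rho_le_t rho_le_r lens_le w zw_lt.
split; first exact: conv_ball_sub_ball _ rho_le_t _ zw_lt.
move=> p [xp_lt yp_lt]; rewrite /eball /= in zw_lt *.
have zp_lt : enorm (z - p) < r - rho.
  rewrite -(ltr_pXn2r (_ : 0 < 2)%N) ?nnegrE ?enorm_ge0 ?subr_ge0 //.
  exact: lt_le_trans (sqr_enorm_conv_lens _ xp_lt yp_lt) lens_le.
have := enormB_triangle w p z; rewrite (enormBC w z); lra.
Qed.

End Lens.

Theorem lemma3p2 (R : realType) (d : nat) (lambda : R) :
  0 < lambda ->
  exists delta1 : R, 0 < delta1 /\
    forall (r : R) (x y : 'rV[R]_d), 0 < r ->
      r <= enorm (x - y) <= lambda * r ->
      exists z : 'rV[R]_d, conv2 x y z /\ eball z (delta1 * r) `<=` Wset x y r.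
Proof.
move=> lambda_gt0.
pose t := (1 + 2 * lambda ^+ 2)^-1.
have tE : t * (1 + 2 * lambda ^+ 2) = 1 by rewrite mulVf //; nra.
have t_gt0 : 0 < t by rewrite invr_gt0; nra.
have t_le1 : t <= 1 by nra.
exists (t / 4); split; first exact: divr_gt0.
move=> r x y r_gt0; rewrite enormBC => /andP[r_le le_lambda_r].
exists ((1 - t) *: x + t *: y); split; first by exists t; rewrite t_le1 ltW.
apply: conv_ball_sub_Wset; [exact: ltW | exact: t_le1 | nra | nra |].
have yx_sqr : enorm (y - x) ^+ 2 <= lambda ^+ 2 * r ^+ 2.
  have yx_ge0 := enorm_ge0 (y - x).
  by rewrite -exprMn ler_pXn2r // nnegrE (le_trans yx_ge0).
have : t ^+ 2 * enorm (y - x) ^+ 2 <= t * ((1 - t) / 2) * r ^+ 2.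
  have -> : (1 - t) / 2 = t * lambda ^+ 2 by lra.
  have -> : t * (t * lambda ^+ 2) * r ^+ 2 = t ^+ 2 * (lambda ^+ 2 * r ^+ 2).
    by ring.
  by rewrite ler_wpM2l ?sqr_ge0.
nra.
Qed.
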